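(* There is no tiling of the sphere by angle congruent pentagons whose pentagon has five pairwise distinct angles $\alpha,\beta,\gamma,\delta,\epsilon$ and in which every vertex is of one of the types $\alpha\beta\gamma$, $\delta^3$, $\delta\epsilon^3$, with at least one vertex of type $\delta\epsilon^3$. In particular the anglewise vertex combination with $36$ tiles, $36$ vertices $\alpha\beta\gamma$, $8$ vertices $\delta^3$ and $12$ vertices $\delta\epsilon^3$ (with $\alpha+\beta+\gamma=2\pi$, $\delta=\frac{2}{3}\pi$, $\epsilon=\frac{4}{9}\pi$) is not realized by any angle congruent tiling.
   Context: A spherical tiling by angle congruent pentagons: embedded graph in the sphere, all faces pentagons, edge-to-edge, every vertex of degree $\ge3$; each corner carries a positive real angle; angles at each vertex sum to $2\pi$; all tiles have the same cyclic sequence of corner angles up to rotation and reflection. Type $\alpha\beta\gamma$: degree $3$ vertex with corner angles $\alpha,\beta,\gamma$; $\delta^3$: degree $3$ vertex with all corners $\delta$; $\delta\epsilon^3$: degree $4$ vertex with corners $\delta,\epsilon,\epsilon,\epsilon$. *)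

From Stdlib Require Import Reals List Permutation.
From mathcomp Require Import all_boot.

Set Implicit Arguments.
Unset Strict Implicit.
Unset Printing Implicit Defensive.

(* Tiles form a finite type T.  The corners ("darts") are the pairs (t, i)   *)
(* with i : 'I_5, listed in the cyclic order of the boundary of tile t, all  *)
(* tiles oriented coherently.  Side i of tile t joins corner i to corner     *)
(* i+1.  The gluing g : corner -> corner is a fixed-point-free involution    *)
(* sending side (t,i) to the side (t',k) of the neighbouring tile glued to   *)
(* it (traversed in the opposite direction).  The rotation around a vertex  *)
(* is then  vrot g = fnext \o g  and the vertices are its orbits.           *)

Notation corner T := (prod (Finite.sort T) (ordinal 5)).

Definition fnext (T : finType) (d : corner T) : corner T := (d.1, ordS d.2).

Definition vrot (T : finType) (g : corner T -> corner T) (d : corner T)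
  : corner T := fnext (g d).

(* the surface built from the pentagons is a sphere whose 1-skeleton has all
   vertices of degree >= 3 and in which every tile is a genuine pentagon
   (five distinct vertices). *)
Definition sphere_pentagon_tiling (T : finType) (g : corner T -> corner T) :=
  [/\ (forall d, g (g d) = d /\ g d <> d),
      (forall d d' : corner T,
         connect [rel x y | (y == g x) || (y == fnext x)] d d'),
      (* Euler characteristic 2 : V - E + F = 2 with E = 5F/2 *)
      (2 * (fcard (vrot g) (@predT (corner T)) + #|T|) = 5 * #|T| + 4)%N,
      (forall d, 3 <= order (vrot g) d)%N &
      (forall (t : T) (i j : 'I_5), i != j -> ~~ fconnect (vrot g) (t, i) (t, j))].

Definition vertex_angles (T : finType) (g : corner T -> corner T)
  (ang : corner T -> R) (d : corner T) : list R :=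
  map ang (orbit (vrot g) d).

Definition angle_assignment (T : finType) (g : corner T -> corner T)
  (ang : corner T -> R) :=
  (forall d, Rlt 0 (ang d)) /\
  (forall d, fold_right Rplus R0 (vertex_angles g ang d) = Rmult 2 PI).

(* angle congruence: every tile has the corner-angle sequence p, up to
   rotation and reflection *)
Definition angle_congruent (T : finType) (ang : corner T -> R)
  (p : 'I_5 -> R) :=
  forall t : T, exists (k : 'I_5) (r : bool), forall i : 'I_5,
    ang (t, i) = p (if r then inord ((k + (5 - i)) %% 5)
                         else inord ((k + i) %% 5)).

From Stdlib Require Import Reals List Permutation.
From mathcomp Require Import all_boot.

Set Implicit Arguments.
Unset Strict Implicit.
Unset Printing Implicit Defensive.

(* The contradiction is local: it only uses the edge-to-edge gluing, the
   cyclic order of the angles in each tile and the three vertex types.  The mirror image of a tiling swaps N with P and V with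
   W and satisfies the same hypotheses, which halves several case analyses.

   Rotate the pentagon so that e comes first; up to reflection d is then the
   neighbour of e or at distance two from it.
   - If d is next to e, then in a vertex de^3 the middle e corner would have
     d on both sides (no_e_corner).
   - If the pentagon reads e x d y z, a vertex d^3 is impossible: a boolean
     flag attached to each of its three tiles changes between consecutive
     tiles (ddd_flip), which cannot happen around an odd cycle; and a vertex
     de^3 forces two consecutive d corners, i.e. a vertex d^3 (no_d_corner). *)

(* Corners of a pentagonal tiling: N and P step to the next and previous corner
   of the same tile, V turns around the vertex of a corner and W is its
   inverse.  "edge" says that the two tiles sharing the side from u to N u meet
   again at its far end, where P (V u) is immediately followed by N u. *)
Record corner_map (X : Type) (N P V W : X -> X) : Prop := CornerMap {
  NK : cancel N P;
  PK : cancel P N;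
  VK : cancel V W;
  WK : cancel W V;
  N5 : forall u, N (N (N (N (N u)))) = u;
  edge : forall u, V (P (V u)) = N u }.

Lemma mirror_map (X : Type) (N P V W : X -> X) :
  corner_map N P V W -> corner_map P N W V.
Proof.
case=> NK PK VK WK N5 edge; split=> // u.
- by rewrite -{1}(N5 u) !NK.
- by rewrite -(edge (W u)) WK VK.
Qed.

Section CornerMapFacts.
Variables (X : Type) (N P V W : X -> X).
Hypothesis cmap : corner_map N P V W.

Lemma V_inj : injective V.
Proof. exact: can_inj (VK cmap). Qed.

Lemma W_on_3cycle u : V (V (V u)) = u ->
  [/\ W u = V (V u), W (W u) = V u & W (W (W u)) = u].
Proof.
move=> V3; have W1 : W u = V (V u) by rewrite -{1}V3 (VK cmap).
by rewrite W1 !(VK cmap).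
Qed.

Lemma W_on_4cycle u : V (V (V (V u))) = u ->
  [/\ W u = V (V (V u)), W (W u) = V (V u), W (W (W u)) = V u
    & W (W (W (W u))) = u].
Proof.
move=> V4; have W1 : W u = V (V (V u)) by rewrite -{1}V4 (VK cmap).
by rewrite W1 !(VK cmap).
Qed.

Lemma NN_PPP u : N (N u) = P (P (P u)).
Proof. by rewrite -{2}(N5 cmap u) !(NK cmap). Qed.

End CornerMapFacts.

(* The
   rules are stated from the point of view of a corner u: they list the angles
   met when turning around the vertex of u starting from u. *)
Record vertex_types (X : Type) (V : X -> X) (ang : X -> R) (A : R -> Prop)
    (d e : R) : Prop := VertexTypes {
  not_A_d : ~ A d;
  not_A_e : ~ A e;
  d_neq_e : d <> e;
  abc_rule : forall u, A (ang u) ->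
    V (V (V u)) = u /\
    [/\ A (ang (V u)), A (ang (V (V u))),
        ang u <> ang (V u), ang (V u) <> ang (V (V u)) & ang (V (V u)) <> ang u];
  d_rule : forall u, ang u = d ->
    [/\ V (V (V u)) = u, ang (V u) = d & ang (V (V u)) = d] \/
    [/\ V (V (V (V u))) = u, ang (V u) = e, ang (V (V u)) = e
      & ang (V (V (V u))) = e];
  e_rule : forall u, ang u = e -> V (V (V (V u))) = u /\
    [\/ [/\ ang (V u) = d, ang (V (V u)) = e & ang (V (V (V u))) = e],
        [/\ ang (V u) = e, ang (V (V u)) = d & ang (V (V (V u))) = e] |
        [/\ ang (V u) = e, ang (V (V u)) = e & ang (V (V (V u))) = d]] }.

Lemma mirror_types (X : Type) (N P V W : X -> X) (ang : X -> R) (A : R -> Prop)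
    (d e : R) :
  corner_map N P V W -> vertex_types V ang A d e -> vertex_types W ang A d e.
Proof.
move=> cmap [Ad Ae de abc dr er]; split=> // u.
- move=> /abc[/(W_on_3cycle cmap)[-> -> ->] [A1 A2 n1 n2 n3]].
  by split=> //; split=> //; apply: nesym.
- by move=> /dr[[/(W_on_3cycle cmap)[-> -> ->] ? ?]
              | [/(W_on_4cycle cmap)[-> -> -> ->] ? ? ?]]; [left | right].
- move=> /er[/(W_on_4cycle cmap)[-> -> -> ->] pat]; split=> //.
  by case: pat => -[h1 h2 h3]; [constructor 3 | constructor 2 | constructor 1].
Qed.

Definition adj (X : Type) (N P : X -> X) (ang : X -> R) (v l r : R) : Prop :=
  forall u, ang u = v ->
    (ang (P u) = l /\ ang (N u) = r) \/ (ang (P u) = r /\ ang (N u) = l).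

Section Adjacency.
Variables (X : Type) (N P : X -> X) (ang : X -> R) (v l r : R).
Hypothesis Hadj : adj N P ang v l r.

Lemma adj_sym : adj N P ang v r l.
Proof. by move=> u /Hadj; tauto. Qed.

Lemma adj_mirror : adj P N ang v r l.
Proof. by move=> u /Hadj; tauto. Qed.

Lemma adj_next_cases u : ang u = v -> ang (N u) = l \/ ang (N u) = r.
Proof. by move/Hadj; tauto. Qed.

Lemma adj_prev_cases u : ang u = v -> ang (P u) = l \/ ang (P u) = r.
Proof. by move/Hadj; tauto. Qed.

Lemma adj_next_other u : ang u = v -> ang (N u) <> l -> ang (N u) = r.
Proof. by move/Hadj; tauto. Qed.

Lemma adj_prev_other u : ang u = v -> ang (P u) <> l -> ang (P u) = r.
Proof. by move/Hadj; tauto. Qed.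

Lemma adj_next u : ang u = v -> ang (P u) = l -> ang (N u) = r.
Proof. by move/Hadj=> [[_ ->] | [-> ->]]. Qed.

Lemma adj_prev u : ang u = v -> ang (N u) = r -> ang (P u) = l.
Proof. by move/Hadj=> [[-> _] | [-> ->]]. Qed.

End Adjacency.

Section VertexFacts.
Variables (X : Type) (N P V W : X -> X) (ang : X -> R) (A : R -> Prop) (d e : R).
Hypotheses (cmap : corner_map N P V W) (vtypes : vertex_types V ang A d e).

Lemma abc_succ u : A (ang u) -> A (ang (V u)) /\ ang (V u) <> ang u.
Proof. by case/(abc_rule vtypes) => _ [A1 _ n1 _ _]; split=> //; apply: nesym. Qed.

Lemma abc_pred u : A (ang (V u)) -> A (ang u) /\ ang u <> ang (V u).
Proof.
case/(abc_rule vtypes) => /(V_inj cmap) V3 [_ A2 _ _ n3].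
by rewrite V3 in A2 n3; split=> //; apply: nesym.
Qed.

Lemma A_neq_d v : A v -> v <> d.
Proof. by move=> Av dv; apply: (not_A_d vtypes); rewrite -dv. Qed.

Lemma A_neq_e v : A v -> v <> e.
Proof. by move=> Av ev; apply: (not_A_e vtypes); rewrite -ev. Qed.

Lemma vertex_across_edge u : A (ang (P (V u))) ->
  V (V (N u)) = P (V u) /\
  [/\ A (ang (N u)), A (ang (V (N u))), ang (N u) <> ang (P (V u)),
      ang (V (N u)) <> ang (N u) & ang (V (N u)) <> ang (P (V u))].
Proof.
case/(abc_rule vtypes) => V3 [A1 A2 n1 n2 n3].
rewrite (edge cmap) in V3 A1 A2 n1 n2 n3.
by split=> //; split=> //; apply: nesym.
Qed.

Lemma three_e u : ang u = e ->
  exists w, [/\ ang w = e, ang (V w) = e & ang (V (V w)) = e].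
Proof.
move=> eu; case: (e_rule vtypes eu) => V4 [[_ e2 e3] | [e1 _ e3] | [e1 e2 _]].
- by exists (V (V u)); rewrite V4.
- by exists (V (V (V u))); rewrite V4.
- by exists u.
Qed.

End VertexFacts.

Section DAdjacentToE.
Variables (X : Type) (N P V W : X -> X) (ang : X -> R) (A : R -> Prop)
  (d e q : R).
Hypotheses (cmap : corner_map N P V W) (vtypes : vertex_types V ang A d e).
Hypotheses (Aq : A q) (adj_e : adj N P ang e d q).

(* For two consecutive e corners u and V u, both corners N u and P (V u) at the
   far end of their common side are d: an angle q there would need another
   angle of A next to it, which is not available among the neighbours of e. *)
Lemma ee_flanked_by_d u : ang u = e -> ang (V u) = e ->
  ang (N u) = d /\ ang (P (V u)) = d.
Proof.
move=> eu eVu; have edge_u := edge cmap u.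
have [dP | qP] := adj_prev_cases adj_e eVu.
- split=> //; case: (adj_next_cases adj_e eu) => // qN.
  have AVP : A (ang (V (P (V u)))) by rewrite edge_u qN.
  have [AP _] := abc_pred cmap vtypes AVP.
  by case: (not_A_d vtypes); rewrite -dP.
- have AP : A (ang (P (V u))) by rewrite qP.
  have [AN nN] := abc_succ vtypes AP.
  rewrite edge_u qP in AN nN.
  case: (adj_next_cases adj_e eu) => hN; rewrite hN in AN nN => //.
  by case: (not_A_d vtypes).
Qed.

(* Hence the middle one of three consecutive e corners has d on both sides,
   contradicting that its neighbours are d and q. *)
Lemma no_e_corner u : ang u = e -> False.
Proof.
case/(three_e vtypes) => w [e0 e1 e2].
have [_ dP] := ee_flanked_by_d e0 e1.
have [dN _] := ee_flanked_by_d e1 e2.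
have dq : q = d by case: (adj_e e1) => -[h1 h2]; congruence.
by case: (not_A_d vtypes); rewrite -dq.
Qed.

End DAdjacentToE.

Record exdyz_pentagon (X : Type) (N P : X -> X) (ang : X -> R) (A : R -> Prop)
    (x y z d e : R) : Prop := ExdyzPentagon {
  A_x : A x;
  A_y : A y;
  A_z : A z;
  A_xyz : forall v, A v -> [\/ v = x, v = y | v = z];
  x_neq_y : x <> y;
  x_neq_z : x <> z;
  y_neq_z : y <> z;
  e_nbrs : adj N P ang e x z;
  x_nbrs : adj N P ang x e d;
  d_nbrs : adj N P ang d x y;
  y_nbrs : adj N P ang y d z;
  z_nbrs : adj N P ang z y e }.

Lemma mirror_exdyz (X : Type) (N P : X -> X) (ang : X -> R) (A : R -> Prop)
    (x y z d e : R) :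
  exdyz_pentagon N P ang A x y z d e -> exdyz_pentagon P N ang A x y z d e.
Proof. by case=> *; split=> //; apply: adj_mirror; apply: adj_sym. Qed.

Section ExdyzPentagon.
Variables (X : Type) (N P V W : X -> X) (ang : X -> R) (A : R -> Prop)
  (x y z d e : R).
Hypotheses (cmap : corner_map N P V W) (vtypes : vertex_types V ang A d e).
Hypothesis pent : exdyz_pentagon N P ang A x y z d e.

Lemma A_is_x v : A v -> v <> y -> v <> z -> v = x.
Proof. by case/(A_xyz pent) => ->. Qed.

Lemma A_is_y v : A v -> v <> x -> v <> z -> v = y.
Proof. by case/(A_xyz pent) => ->. Qed.

Lemma A_is_z v : A v -> v <> x -> v <> y -> v = z.
Proof. by case/(A_xyz pent) => ->. Qed.

Lemma ee_x_gives_dd u : ang u = e -> ang (V u) = e -> ang (P (V u)) = x ->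
  ang (P (P (V u))) = d /\ ang (V (P (P (V u)))) = d.
Proof.
move=> eu eVu xPVu.
have AP : A (ang (P (V u))) by rewrite xPVu; exact: A_x pent.
have [V3 [AN Aq Nx qN qx]] := vertex_across_edge cmap vtypes AP.
rewrite xPVu in Nx qx.
have zN := adj_next_other (e_nbrs pent) eu Nx.
rewrite zN in qN.
have yq := A_is_y Aq qx qN.
have ePN : ang (P (N u)) = e by rewrite (NK cmap).
have yNN := adj_next (adj_sym (z_nbrs pent)) zN ePN.
have AVPq : A (ang (V (P (V (N u))))) by rewrite (edge cmap) yNN; exact: A_y pent.
have [APq _] := abc_pred cmap vtypes AVPq.
have zPq := adj_prev_other (y_nbrs pent) yq (A_neq_d vtypes APq).
have dNq := adj_next (adj_sym (y_nbrs pent)) yq zPq.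
have eNPVu : ang (N (P (V u))) = e by rewrite (PK cmap).
split; first exact: (adj_prev (adj_sym (x_nbrs pent)) xPVu eNPVu).
by rewrite -V3 (edge cmap).
Qed.

Lemma de_x_gives_e u : ang u = d -> ang (V u) = e -> ang (P (V u)) = x ->
  ang (V (P (P (V u)))) = e.
Proof.
move=> du eVu xPVu.
have AP : A (ang (P (V u))) by rewrite xPVu; exact: A_x pent.
have [V3 [AN Aq Nx qN qx]] := vertex_across_edge cmap vtypes AP.
rewrite xPVu in Nx qx.
have yN := adj_next_other (d_nbrs pent) du Nx.
rewrite yN in qN.
have zq := A_is_z Aq qx qN.
have dPN : ang (P (N u)) = d by rewrite (NK cmap).
have zNN := adj_next (y_nbrs pent) yN dPN.
have AVPq : A (ang (V (P (V (N u))))) by rewrite (edge cmap) zNN; exact: A_z pent.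
have [APq _] := abc_pred cmap vtypes AVPq.
have yPq := adj_prev_other (adj_sym (z_nbrs pent)) zq (A_neq_e vtypes APq).
have eNq := adj_next (z_nbrs pent) zq yPq.
by rewrite -V3 (edge cmap).
Qed.

(* Whether d comes right after V E is decided by the corner following
   P (P E) at its vertex (the two lemmas above, applied to the corner
   preceding E at its vertex). *)
Lemma flag_transfer E : ang E = e -> ang (V E) = e -> ang (P E) = x ->
  ang (V (V E)) = d <-> ang (V (P (P E))) = d.
Proof.
move=> eE eVE xPE.
case: (e_rule vtypes eE) => V4 [[dVE _ _] | [_ dVVE eV3E] | [_ eVVE dV3E]].
- by case: (d_neq_e vtypes); rewrite -dVE.
- have eV4E : ang (V (V (V (V E)))) = e by rewrite V4.
  have xPV4E : ang (P (V (V (V (V E))))) = x by rewrite V4.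
  have [_] := ee_x_gives_dd eV3E eV4E xPV4E.
  by rewrite V4 dVVE.
- have eV4E : ang (V (V (V (V E)))) = e by rewrite V4.
  have xPV4E : ang (P (V (V (V (V E))))) = x by rewrite V4.
  have := de_x_gives_e dV3E eV4E xPV4E.
  rewrite V4 eVVE => ->; split=> /esym /(d_neq_e vtypes) [].
Qed.

Lemma x_corner_flag r : ang r = x -> ang (V (P r)) = d ->
  (ang (N r) = d <-> ang (V (V (P r))) <> d).
Proof.
move=> xr dVPr.
case: (adj_prev_cases (x_nbrs pent) xr) => [ePr | dPr].
- split=> [_ | _]; last exact: (adj_next (x_nbrs pent) xr ePr).
  case: (e_rule vtypes ePr) => _ [[_ eVV _] | [eV _ _] | [eV _ _]].
  + by rewrite eVV => /esym /(d_neq_e vtypes).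
  + by case: (d_neq_e vtypes); rewrite -dVPr eV.
  + by case: (d_neq_e vtypes); rewrite -dVPr eV.
- rewrite (adj_next (adj_sym (x_nbrs pent)) xr dPr).
  case: (d_rule vtypes dPr) => [[_ _ dVV] | [_ eV _ _]].
  + by rewrite dVV; split=> [/esym /(d_neq_e vtypes) [] | []].
  + by case: (d_neq_e vtypes); rewrite -dVPr eV.
Qed.

Lemma ddd_next_x u : ang u = d -> ang (V u) = d -> ang (N u) = x ->
  ang (P (V u)) = y /\ ang (N (V u)) = x.
Proof.
move=> du dVu xNu.
have AVP : A (ang (V (P (V u)))) by rewrite (edge cmap) xNu; exact: A_x pent.
have [_] := abc_pred cmap vtypes AVP.
rewrite (edge cmap) xNu => Px.
have yP := adj_prev_other (d_nbrs pent) dVu Px.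
by split; last exact: (adj_next (adj_sym (d_nbrs pent)) dVu yP).
Qed.

Lemma ddd_middle_corner u : ang u = d -> ang (V u) = d -> ang (N u) = x ->
  V (V (N u)) = P (V u) /\ ang (V (N u)) = z.
Proof.
move=> du dVu xNu.
have [yPVu _] := ddd_next_x du dVu xNu.
have AP : A (ang (P (V u))) by rewrite yPVu; exact: A_y pent.
have [V3 [_ As _ sN sP]] := vertex_across_edge cmap vtypes AP.
by rewrite xNu yPVu in sN sP; split; last exact: A_is_z As sN sP.
Qed.

Lemma ddd_middle_tile u : ang u = d -> ang (V u) = d -> ang (N u) = x ->
  [/\ ang (P (V (V (N u)))) = z, ang (N (V (N u))) = y,
      ang (P (V (N u))) = e & V (P (V (N u))) = N (N u)].
Proof.
move=> du dVu xNu.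
have [yPVu _] := ddd_next_x du dVu xNu.
have [Vs zs] := ddd_middle_corner du dVu xNu.
have dNPVu : ang (N (P (V u))) = d by rewrite (PK cmap).
have zPPVu := adj_prev (adj_sym (y_nbrs pent)) yPVu dNPVu.
have AP : A (ang (P (V (V (N u))))) by rewrite Vs zPPVu; exact: A_z pent.
have [ANs _] := abc_succ vtypes AP.
rewrite (edge cmap) in ANs.
have yNs := adj_next_other (adj_sym (z_nbrs pent)) zs (A_neq_e vtypes ANs).
split; rewrite ?Vs //; last exact: (edge cmap).
exact: (adj_prev (adj_sym (z_nbrs pent)) zs yNs).
Qed.

(* For a d corner u of a vertex d^3, the tile of u has its e corner at N (N u);
   the flag records whether that corner is followed by d at its vertex. *)
Definition e_flag u := ang (V (N (N u))) = d.

Lemma ddd_flip u : ang u = d -> ang (V u) = d -> ang (N u) = x ->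
  e_flag (V u) <-> ~ e_flag u.
Proof.
move=> du dVu xNu.
have [Vs zs] := ddd_middle_corner du dVu xNu.
have [zPVs yNs ePs VPs] := ddd_middle_tile du dVu xNu.
set s := V (N u) in Vs zs zPVs yNs ePs VPs.
have dPNu : ang (P (N u)) = d by rewrite (NK cmap).
have eNNu := adj_next (adj_sym (x_nbrs pent)) xNu dPNu.
have zNPs : ang (N (P s)) = z by rewrite (PK cmap).
have xPPs := adj_prev (e_nbrs pent) ePs zNPs.
have eVPs : ang (V (P s)) = e by rewrite VPs.
have transfer := flag_transfer ePs eVPs xPPs.
have AP : A (ang (P (V s))) by rewrite zPVs; exact: A_z pent.
have [Vr [_ Ar _ rNs rPVs]] := vertex_across_edge cmap vtypes AP.
rewrite yNs zPVs in rNs rPVs.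
have xr := A_is_x Ar rNs rPVs.
have zPNs : ang (P (N s)) = z by rewrite (NK cmap).
have dNNs := adj_next (adj_sym (y_nbrs pent)) yNs zPNs.
have dVPr : ang (V (P (V (N s)))) = d by rewrite (edge cmap).
have flag_Vu : e_flag (V u) <-> ang (N (V (N s))) = d.
  by rewrite /e_flag (NN_PPP cmap) -Vs -Vr (edge cmap).
have flag_u : e_flag u <-> ang (V (V (P s))) = d by rewrite /e_flag VPs.
by rewrite flag_Vu (x_corner_flag xr dVPr) (edge cmap) (NN_PPP cmap) flag_u transfer.
Qed.

(* So a vertex d^3 whose tiles continue with x is impossible: the flag would
   change three times around it. *)
Lemma no_dd_along_x u : ang u = d -> ang (V u) = d -> ang (N u) = x -> False.
Proof.
move=> du dVu xNu.
case: (d_rule vtypes du) => [[V3 _ dVVu] | [_ eVu _ _]]; last first.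
  by case: (d_neq_e vtypes); rewrite -dVu eVu.
have [_ xNVu] := ddd_next_x du dVu xNu.
have [_ xNVVu] := ddd_next_x dVu dVVu xNVu.
have dV3u : ang (V (V (V u))) = d by rewrite V3.
have := ddd_flip du dVu xNu.
have := ddd_flip dVu dVVu xNVu.
have := ddd_flip dVVu dV3u xNVVu.
by rewrite V3; tauto.
Qed.

Lemma ee_z_gives_dd u : ang u = e -> ang (V u) = e -> ang (N (V u)) = z ->
  exists w, ang w = d /\ ang (V w) = d.
Proof.
move=> eu eVu zNVu.
have xPVu := adj_prev (e_nbrs pent) eVu zNVu.
by exists (P (P (V u))); apply: ee_x_gives_dd.
Qed.

End ExdyzPentagon.

(* The remaining orientations are handled in the mirror image. *)
Section ExdyzConclusion.
Variables (X : Type) (N P V W : X -> X) (ang : X -> R) (A : R -> Prop)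
  (x y z d e : R).
Hypotheses (cmap : corner_map N P V W) (vtypes : vertex_types V ang A d e).
Hypothesis pent : exdyz_pentagon N P ang A x y z d e.

Let cmap' := mirror_map cmap.
Let vtypes' := mirror_types cmap vtypes.
Let pent' := mirror_exdyz pent.

Lemma no_dd u : ang u = d -> ang (V u) = d -> False.
Proof.
move=> du dVu.
case: (adj_next_cases (d_nbrs pent) du) => [xNu | yNu].
  exact: (no_dd_along_x cmap vtypes pent du dVu xNu).
have xPu := adj_prev (d_nbrs pent) du yNu.
case: (d_rule vtypes du) => [[V3 _ dVVu] | [_ eVu _ _]]; last first.
  by case: (d_neq_e vtypes); rewrite -dVu eVu.
have [W1 _ _] := W_on_3cycle cmap V3.
have dWu : ang (W u) = d by rewrite W1.
exact: (no_dd_along_x cmap' vtypes' pent' du dWu xPu).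
Qed.

(* No corner has angle d: a vertex de^3 would yield two consecutive d corners,
   in the tiling or in its mirror image. *)
Lemma no_d_corner u : ang u = d -> False.
Proof.
move=> du.
case: (d_rule vtypes du) => [[_ dVu _] | [_ eVu eVVu eV3u]].
  exact: no_dd du dVu.
case: (adj_next_cases (e_nbrs pent) eVVu) => [xN | zN].
- have zP := adj_prev (adj_sym (e_nbrs pent)) eVVu xN.
  have WV3 : W (V (V (V u))) = V (V u) := VK cmap _.
  have eWV3 : ang (W (V (V (V u)))) = e by rewrite WV3.
  have zPWV3 : ang (P (W (V (V (V u))))) = z by rewrite WV3.
  have [w [dw dWw]] := (ee_z_gives_dd cmap' vtypes' pent' eV3u eWV3 zPWV3).
  have dVWw : ang (V (W w)) = d by rewrite (WK cmap).
  exact: no_dd dWw dVWw.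
- have [w [dw dVw]] := ee_z_gives_dd cmap vtypes pent eVu eVVu zN.
  exact: no_dd dw dVw.
Qed.

End ExdyzConclusion.

Record pentagon (X : Type) (N P : X -> X) (ang : X -> R)
    (q0 q1 q2 q3 q4 : R) : Prop := Pentagon {
  nbrs0 : adj N P ang q0 q4 q1;
  nbrs1 : adj N P ang q1 q0 q2;
  nbrs2 : adj N P ang q2 q1 q3;
  nbrs3 : adj N P ang q3 q2 q4;
  nbrs4 : adj N P ang q4 q3 q0 }.

Section PentagonSymmetries.
Variables (X : Type) (N P : X -> X) (ang : X -> R) (L : list R).

Lemma pentagon_rotate q0 q1 q2 q3 q4 :
  pentagon N P ang q0 q1 q2 q3 q4 -> Permutation L [:: q0; q1; q2; q3; q4] ->
  pentagon N P ang q1 q2 q3 q4 q0 /\ Permutation L [:: q1; q2; q3; q4; q0].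
Proof.
case=> ? ? ? ? ? perm; split; first by split.
exact: Permutation_trans perm (Permutation_cons_append _ _).
Qed.

Lemma pentagon_reflect q0 q1 q2 q3 q4 :
  pentagon N P ang q0 q1 q2 q3 q4 -> Permutation L [:: q0; q1; q2; q3; q4] ->
  pentagon N P ang q0 q4 q3 q2 q1 /\ Permutation L [:: q0; q4; q3; q2; q1].
Proof.
case=> ? ? ? ? ? perm; split; first by split; apply: adj_sym.
exact: Permutation_trans perm (perm_skip q0 (Permutation_rev [:: q1; q2; q3; q4])).
Qed.

Lemma pentagon_start_at v q0 q1 q2 q3 q4 :
  pentagon N P ang q0 q1 q2 q3 q4 -> Permutation L [:: q0; q1; q2; q3; q4] ->
  In v [:: q0; q1; q2; q3; q4] ->
  exists r1 r2 r3 r4, pentagon N P ang v r1 r2 r3 r4 /\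
    Permutation L [:: v; r1; r2; r3; r4].
Proof.
move=> pent0 perm0.
have [pent1 perm1] := pentagon_rotate pent0 perm0.
have [pent2 perm2] := pentagon_rotate pent1 perm1.
have [pent3 perm3] := pentagon_rotate pent2 perm2.
have [pent4 perm4] := pentagon_rotate pent3 perm3.
case=> [<- | [<- | [<- | [<- | [<- | []]]]]]; do 4 eexists; split; eassumption.
Qed.

Lemma pentagon_near_first v q1 q2 q3 q4 w :
  pentagon N P ang v q1 q2 q3 q4 -> Permutation L [:: v; q1; q2; q3; q4] ->
  In w [:: q1; q2; q3; q4] ->
  exists r1 r2 r3 r4, [/\ pentagon N P ang v r1 r2 r3 r4,
    Permutation L [:: v; r1; r2; r3; r4] & (w = r1 \/ w = r2)].
Proof.
move=> pent perm win.
have [pent' perm'] := pentagon_reflect pent perm.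
case: win pent perm pent' perm'
  => [-> | [-> | [-> | [-> | []]]]] pent perm pent' perm'.
- by exists w, q2, q3, q4; split=> //; left.
- by exists q1, w, q3, q4; split=> //; right.
- by exists q4, w, q2, q1; split=> //; right.
- by exists w, q3, q2, q1; split=> //; left.
Qed.

End PentagonSymmetries.

Lemma perm_drop_ed (a b c d e r2 r3 r4 : R) :
  Permutation [:: a; b; c; d; e] [:: e; d; r2; r3; r4] ->
  Permutation [:: a; b; c] [:: r2; r3; r4].
Proof.
move/Permutation_sym/(@Permutation_cons_app_inv _ _ [:: a; b; c; d] [::]).
move/(@Permutation_cons_app_inv _ _ [:: a; b; c] [::]).
exact: Permutation_sym.
Qed.

Lemma perm_drop_e_d (a b c d e x y z : R) :
  Permutation [:: a; b; c; d; e] [:: e; x; d; y; z] ->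
  Permutation [:: a; b; c] [:: x; y; z].
Proof.
move/Permutation_sym/(@Permutation_cons_app_inv _ _ [:: a; b; c; d] [::]) => H.
have: Permutation [:: d; x; y; z] [:: a; b; c; d].
  exact: Permutation_trans (perm_swap _ _ _) H.
move/(@Permutation_cons_app_inv _ _ [:: a; b; c] [::]).
exact: Permutation_sym.
Qed.

Lemma exdyz_of_pentagon (X : Type) (N P : X -> X) (ang : X -> R)
    (a b c x y z d e : R) :
  pentagon N P ang e x d y z -> NoDup [:: a; b; c] ->
  Permutation [:: a; b; c] [:: x; y; z] ->
  exdyz_pentagon N P ang (fun v => In v [:: a; b; c]) x y z d e.
Proof.
case=> nbe nbx nbd nby nbz nd3 perm.
have in_abc v : In v [:: x; y; z] -> In v [:: a; b; c] :=
  Permutation_in v (Permutation_sym perm).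
move: (Permutation_NoDup perm nd3) =>
  /NoDup_cons_iff [/= nx /NoDup_cons_iff [/= ny _]].
split=> //; try (by apply: in_abc; simpl; tauto); try (by move=> E; subst; tauto).
- move=> v /(Permutation_in v perm) [| [| [|[]]]];
    by [constructor 1 | constructor 2 | constructor 3].
- exact: adj_sym.
Qed.

Lemma pentagon_impossible (X : Type) (N P V W : X -> X) (ang : X -> R)
    (a b c d e q0 q1 q2 q3 q4 : R) (ud ue : X) :
  corner_map N P V W -> vertex_types V ang (fun v => In v [:: a; b; c]) d e ->
  pentagon N P ang q0 q1 q2 q3 q4 ->
  Permutation [:: a; b; c; d; e] [:: q0; q1; q2; q3; q4] ->
  NoDup [:: a; b; c; d; e] -> ang ud = d -> ang ue = e -> False.
Proof.
move=> cmap vtypes pent perm nd dud eue.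
have in_q v : In v [:: a; b; c; d; e] -> In v [:: q0; q1; q2; q3; q4] :=
  Permutation_in v perm.
have [r1 [r2 [r3 [r4 [pent1 perm1]]]]] :=
  pentagon_start_at pent perm (in_q e ltac:(simpl; tauto)).
have d_near : In d [:: r1; r2; r3; r4].
  case: (Permutation_in d perm1 ltac:(simpl; tauto)) => // ed.
  by case: (d_neq_e vtypes).
have [s1 [s2 [s3 [s4 [pent2 perm2 [ds1 | ds2]]]]]] :=
  pentagon_near_first pent1 perm1 d_near.
- subst s1.
  have As4 : In s4 [:: a; b; c].
    apply: (Permutation_in s4 (Permutation_sym (perm_drop_ed perm2))).
    by simpl; tauto.
  exact: (no_e_corner cmap vtypes As4 (adj_sym (nbrs0 pent2)) eue).
- subst s2.
  have nd3 : NoDup [:: a; b; c] := NoDup_app_remove_r [:: a; b; c] [:: d; e] nd.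
  have pent3 := exdyz_of_pentagon pent2 nd3 (perm_drop_e_d perm2).
  exact: (no_d_corner cmap vtypes pent3 dud).
Qed.

Definition fprev (T : finType) (u : corner T) : corner T := (u.1, ord_pred u.2).

Lemma fnextK (T : finType) : cancel (@fnext T) (@fprev T).
Proof. by case=> t i; rewrite /fnext /fprev /= ordSK. Qed.

Lemma fprevK (T : finType) : cancel (@fprev T) (@fnext T).
Proof. by case=> t i; rewrite /fnext /fprev /= ord_predK. Qed.

Lemma fnext5 (T : finType) (u : corner T) :
  fnext (fnext (fnext (fnext (fnext u)))) = u.
Proof. by case: u => t [[|[|[|[|[|i]]]]] Hi] //; congr pair; apply: val_inj. Qed.

Lemma corner_map_of_gluing (T : finType) (g : corner T -> corner T) :
  (forall u, g (g u) = u) ->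
  corner_map (@fnext T) (@fprev T) (vrot g) (fun u => g (fprev u)).
Proof.
move=> gK; split=> [||u|u|u|u]; rewrite /vrot ?fnextK ?gK ?fprevK //.
- exact: fnextK.
- exact: fprevK.
- exact: fnext5.
Qed.

Lemma nodup_abcde (a b c d e : R) : NoDup [:: a; b; c; d; e] ->
  [/\ NoDup [:: a; b; c], ~ In d [:: a; b; c], ~ In e [:: a; b; c] & d <> e].
Proof.
move=> nd; have nd3 := NoDup_app_remove_r [:: a; b; c] [:: d; e] nd.
move: nd => /NoDup_cons_iff [na /NoDup_cons_iff [nb /NoDup_cons_iff
  [nc /NoDup_cons_iff [nd _]]]].
by split=> //= *; simpl in *; intuition congruence.
Qed.

Lemma vertex_cycle (T : finType) (f : T -> T) (ang : T -> R) (u : T) (L : list R) :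
  injective f -> Permutation (map ang (orbit f u)) L ->
  iter (size L) f u = u /\ Permutation (map ang (traject f u (size L))) L.
Proof.
move=> injf perm.
have ord : order f u = size L.
  by rewrite -size_orbit -(size_map ang); exact: Permutation_length perm.
by rewrite -ord (iter_order injf); split.
Qed.

Lemma perm_abc (a b c v0 v1 v2 : R) : NoDup [:: a; b; c] ->
  Permutation [:: v0; v1; v2] [:: a; b; c] ->
  [/\ In v1 [:: a; b; c], In v2 [:: a; b; c], v0 <> v1, v1 <> v2 & v2 <> v0].
Proof.
move=> nd perm.
have in_abc v : In v [:: v0; v1; v2] -> In v [:: a; b; c] := Permutation_in v perm.
move: (Permutation_NoDup (Permutation_sym perm) nd) =>
  /NoDup_cons_iff [/= n0 /NoDup_cons_iff [/= n1 _]].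
split; try (by apply: in_abc; simpl; tauto); by move=> E; subst; tauto.
Qed.

Lemma perm_ddd (d v0 v1 v2 : R) : Permutation [:: v0; v1; v2] [:: d; d; d] ->
  [/\ v0 = d, v1 = d & v2 = d].
Proof.
move=> perm; have all_d v : In v [:: v0; v1; v2] -> v = d.
  by move=> /(Permutation_in v perm) /=; intuition.
by split; apply: all_d; simpl; tauto.
Qed.

Lemma perm_deee (d e v0 v1 v2 v3 : R) : d <> e ->
  Permutation [:: v0; v1; v2; v3] [:: d; e; e; e] ->
  [/\ v0 = d, v1 = e, v2 = e & v3 = e] \/
  v0 = e /\ [\/ [/\ v1 = d, v2 = e & v3 = e], [/\ v1 = e, v2 = d & v3 = e] |
                [/\ v1 = e, v2 = e & v3 = d]].
Proof.
move=> de perm.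
have all_e l : Permutation [:: e; e; e] l -> forall v, In v l -> v = e.
  by move=> H v /(Permutation_in v (Permutation_sym H)) /=; intuition.
have d_in := Permutation_in d (Permutation_sym perm) (in_eq _ _).
case: d_in perm => [-> | [-> | [-> | [-> | []]]]] /Permutation_sym perm.
- have := all_e _ (Permutation_cons_inv perm) => /= E.
  by left; split=> //; apply: E; tauto.
- have := all_e _ (@Permutation_cons_app_inv _ _ [:: v0] [:: v2; v3] _ perm) => /= E.
  by right; split; [|constructor 1; split=> //]; apply: E; tauto.
- have := all_e _ (@Permutation_cons_app_inv _ _ [:: v0; v1] [:: v3] _ perm) => /= E.
  by right; split; [|constructor 2; split=> //]; apply: E; tauto.
- have := all_e _ (@Permutation_cons_app_inv _ _ [:: v0; v1; v2] [::] _ perm) => /= E.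
  by right; split; [|constructor 3; split=> //]; apply: E; tauto.
Qed.

Lemma vertex_types_of_classification (T : finType) (f : T -> T) (ang : T -> R)
    (a b c d e : R) :
  injective f -> NoDup [:: a; b; c; d; e] ->
  (forall u, Permutation (map ang (orbit f u)) [:: a; b; c] \/
             Permutation (map ang (orbit f u)) [:: d; d; d] \/
             Permutation (map ang (orbit f u)) [:: d; e; e; e]) ->
  vertex_types f ang (fun v => In v [:: a; b; c]) d e.
Proof.
move=> injf nd classify.
have [nd3 dA eA de] := nodup_abcde nd.
have kinds u : [\/ f (f (f u)) = u /\
      Permutation [:: ang u; ang (f u); ang (f (f u))] [:: a; b; c],
    f (f (f u)) = u /\ [/\ ang u = d, ang (f u) = d & ang (f (f u)) = d] |
    f (f (f (f u))) = u /\
      Permutation [:: ang u; ang (f u); ang (f (f u)); ang (f (f (f u)))]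
        [:: d; e; e; e]].
  case: (classify u) => [| []] /(vertex_cycle injf) [cyc perm].
  - by constructor 1.
  - by constructor 2; split=> //; apply: perm_ddd.
  - by constructor 3.
have first_abc u : Permutation [:: ang u; ang (f u); ang (f (f u))] [:: a; b; c] ->
    In (ang u) [:: a; b; c].
  by move=> perm; apply: Permutation_in perm _; left.
split=> // u.
- move=> Au; case: (kinds u)
    => [[cyc /(perm_abc nd3) ?] | [_ [du _ _]] | [_ /(perm_deee de)]].
  + by split.
  + by case: dA; rewrite -du.
  + by case=> [[du _ _ _] | [eu _]]; [case: dA; rewrite -du | case: eA; rewrite -eu].
- move=> du; case: (kinds u)
    => [[_ /first_abc] | [cyc [_ ? ?]] | [cyc /(perm_deee de)]].
  + by rewrite du.
  + by left.
  + by case=> [[_ ? ? ?] | [eu _]]; [right | case: de; rewrite -du].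
- move=> eu; case: (kinds u)
    => [[_ /first_abc] | [_ [du _ _]] | [cyc /(perm_deee de)]].
  + by rewrite eu.
  + by case: de; rewrite -du.
  + by case=> [[du _ _ _] | [_ ?]]; [case: de; rewrite -du | split].
Qed.

(* Angle congruence gives corner i of a tile the angle p (relabel k r i), for a
   rotation or reflection relabel k r of the 5-cycle; these map neighbouring
   positions to neighbouring positions. *)
Definition relabel (k : 'I_5) (r : bool) (i : 'I_5) : 'I_5 :=
  if r then inord ((k + (5 - i)) %% 5) else inord ((k + i) %% 5).

Lemma relabel_cyclic (k i : 'I_5) (r : bool) :
  (relabel k r (ordS i) == ordS (relabel k r i)) &&
    (relabel k r (ord_pred i) == ord_pred (relabel k r i)) ||
  (relabel k r (ordS i) == ord_pred (relabel k r i)) &&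
    (relabel k r (ord_pred i) == ordS (relabel k r i)).
Proof.
by case: r; case: k i => [[|[|[|[|[|?]]]]] ?] [[|[|[|[|[|?]]]]] ?] //;
  rewrite /relabel /= -!val_eqE /= !inordK.
Qed.

Lemma congruent_adj (T : finType) (ang : corner T -> R) (p : 'I_5 -> R) :
  angle_congruent ang p -> injective p ->
  forall j, adj (@fnext T) (@fprev T) ang (p j) (p (ord_pred j)) (p (ordS j)).
Proof.
move=> cong injp j [t i] /=.
have [k [r angE]] := cong t.
have angE' i' : ang (t, i') = p (relabel k r i') := angE i'.
rewrite /fnext /fprev /= !angE' => /injp <-.
by case/orP: (relabel_cyclic k i r) => /andP [/eqP -> /eqP ->]; [left | right].
Qed.

Definition pos (n : nat) : 'I_5 := iter n (@ordS 5) ord0.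

Lemma enum_I5 : enum 'I_5 = [:: pos 0; pos 1; pos 2; pos 3; pos 4].
Proof. by apply: (inj_map val_inj); rewrite val_enum_ord. Qed.

Lemma pentagon_of_congruence (T : finType) (ang : corner T -> R) (p : 'I_5 -> R) :
  angle_congruent ang p -> injective p ->
  pentagon (@fnext T) (@fprev T) ang
    (p (pos 0)) (p (pos 1)) (p (pos 2)) (p (pos 3)) (p (pos 4)).
Proof.
move=> cong injp; have nbrs := congruent_adj cong injp.
have pred_pos n : ord_pred (pos n.+1) = pos n by rewrite /= ordSK.
have pred0 : ord_pred (pos 0) = pos 4 by apply: val_inj.
have succ4 : ordS (pos 4) = pos 0 by apply: val_inj.
split; [move: (nbrs (pos 0)); rewrite pred0 | move: (nbrs (pos 1))
       | move: (nbrs (pos 2)) | move: (nbrs (pos 3))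
       | move: (nbrs (pos 4)); rewrite succ4]; by rewrite ?pred_pos.
Qed.

Lemma In_of_mem (T : eqType) (x : T) (s : seq T) : x \in s -> In x s.
Proof.
by elim: s => //= y s IH; rewrite inE => /orP [/eqP -> | /IH]; [left | right].
Qed.

Lemma In_map_of_In (A B : Type) (f : A -> B) (s : seq A) (x : A) :
  In x s -> In (f x) (map f s).
Proof. by elim: s => //= y s IH [-> | /IH]; [left | right]. Qed.

Lemma injective_of_NoDup (T : finType) (p : T -> R) :
  NoDup (map p (enum T)) -> injective p.
Proof.
have key (s : seq T) u v : NoDup (map p s) -> In u s -> In v s -> p u = p v -> u = v.
  elim: s => //= w s IH /NoDup_cons_iff [pw nd] [<- | us] [<- | vs] // puv.
  - by case: pw; rewrite puv; apply: In_map_of_In.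
  - by case: pw; rewrite -puv; apply: In_map_of_In.
  - exact: IH.
by move=> nd u v; apply: key nd _ _; apply: In_of_mem; rewrite mem_enum.
Qed.

Lemma In_map_ex (A B : Type) (f : A -> B) (s : seq A) (y : B) :
  In y (map f s) -> exists x, f x = y.
Proof. by elim: s => //= x s IH [<- | /IH]; [exists x |]. Qed.

Theorem mainTheorem8 :
  forall (T : finType) (g : corner T -> corner T) (ang : corner T -> R)
         (p : 'I_5 -> R) (a b c d e : R),
    sphere_pentagon_tiling g ->
    angle_assignment g ang ->
    angle_congruent ang p ->
    NoDup (a :: b :: c :: d :: e :: nil) ->
    Permutation (a :: b :: c :: d :: e :: nil) (map p (enum 'I_5)) ->
    (forall x : corner T,
       Permutation (vertex_angles g ang x) (a :: b :: c :: nil) \/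
       Permutation (vertex_angles g ang x) (d :: d :: d :: nil) \/
       Permutation (vertex_angles g ang x) (d :: e :: e :: e :: nil)) ->
    ~ (exists x : corner T,
         Permutation (vertex_angles g ang x) (d :: e :: e :: e :: nil)).
Proof.
move=> T g ang p a b c d e [gK _ _ _ _] _ cong nd perm classify [x0 deee].
have cmap := corner_map_of_gluing (fun u => proj1 (gK u)).
have vtypes := vertex_types_of_classification (V_inj cmap) nd classify.
have injp := injective_of_NoDup (Permutation_NoDup perm nd).
have pent := pentagon_of_congruence cong injp.
rewrite enum_I5 in perm.
have angle_at v : In v [:: d; e; e; e] -> exists u, ang u = v.
  by move=> vin; apply: In_map_ex (Permutation_in v (Permutation_sym deee) vin).
have [ud dud] := angle_at d ltac:(simpl; tauto).
have [ue eue] := angle_at e ltac:(simpl; tauto).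
exact: (pentagon_impossible cmap vtypes pent perm nd dud eue).
Qed.
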